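(* Let $(X,d,f)$ be a dynamical system with $f$ uniformly continuous, let $(\hat X,\hat d)$ be the completion of $(X,d)$ and $\hat f$ the (uniformly continuous) extension of $f$ to $\hat X$. If $(X,d,f)$ has the shadowing property, then so does $(\hat X,\hat d,\hat f)$; and if $(X,d,f)$ has the finite shadowing property, then so does $(\hat X,\hat d,\hat f)$.
   Context: A dynamical system $(X,d,f)$ is a separable metric space with continuous $f:X\to X$. A $\delta$-pseudo-orbit is a finite or infinite sequence $(x_n)$ with $d(f(x_n),x_{n+1})<\delta$ for consecutive indices; $x$ $\varepsilon$-shadows it if $d(f^n(x),x_n)<\varepsilon$ for all indices. Finite shadowing property: for every $\varepsilon>0$ there is $\delta>0$ such that every finite $\delta$-pseudo-orbit is $\varepsilon$-shadowed by some point; shadowing property: same with infinite pseudo-orbits. *)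

From Stdlib Require Import Reals.
Open Scope R_scope.

Definition is_metric {X : Type} (d : X -> X -> R) : Prop :=
  (forall x y, 0 <= d x y) /\
  (forall x y, d x y = 0 <-> x = y) /\
  (forall x y, d x y = d y x) /\
  (forall x y z, d x z <= d x y + d y z).

Definition separable {X : Type} (d : X -> X -> R) : Prop :=
  exists (D : X -> Prop) (code : X -> nat),
    (forall x y, D x -> D y -> code x = code y -> x = y) /\
    (forall x eps, 0 < eps -> exists y, D y /\ d x y < eps).

Definition cauchy_seq {X : Type} (d : X -> X -> R) (u : nat -> X) : Prop :=
  forall eps, 0 < eps -> exists N, forall m n, (N <= m)%nat -> (N <= n)%nat ->
    d (u m) (u n) < eps.

Definition converges_to {X : Type} (d : X -> X -> R) (u : nat -> X) (l : X) : Prop :=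
  forall eps, 0 < eps -> exists N, forall n, (N <= n)%nat -> d (u n) l < eps.

Definition complete_metric {X : Type} (d : X -> X -> R) : Prop :=
  forall u, cauchy_seq d u -> exists l, converges_to d u l.

Definition uniformly_continuous {X Y : Type} (dX : X -> X -> R) (dY : Y -> Y -> R)
  (f : X -> Y) : Prop :=
  forall eps, 0 < eps -> exists delta, 0 < delta /\
    forall x y, dX x y < delta -> dY (f x) (f y) < eps.

Definition isometry {X Y : Type} (dX : X -> X -> R) (dY : Y -> Y -> R) (i : X -> Y) : Prop :=
  forall x y, dY (i x) (i y) = dX x y.

Definition dense_range {X Y : Type} (dY : Y -> Y -> R) (i : X -> Y) : Prop :=
  forall y eps, 0 < eps -> exists x, dY (i x) y < eps.

Definition is_completion {X Y : Type} (dX : X -> X -> R) (dY : Y -> Y -> R) (i : X -> Y) : Prop :=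
  is_metric dY /\ complete_metric dY /\ isometry dX dY i /\ dense_range dY i.

Fixpoint iter {X : Type} (f : X -> X) (n : nat) (x : X) : X :=
  match n with O => x | S k => f (iter f k x) end.

Definition pseudo_orbit {X : Type} (d : X -> X -> R) (f : X -> X) (delta : R) (x : nat -> X) : Prop :=
  forall n, d (f (x n)) (x (S n)) < delta.

Definition finite_pseudo_orbit {X : Type} (d : X -> X -> R) (f : X -> X) (delta : R)
  (N : nat) (x : nat -> X) : Prop :=
  forall n, (n < N)%nat -> d (f (x n)) (x (S n)) < delta.

Definition shadows {X : Type} (d : X -> X -> R) (f : X -> X) (eps : R) (z : X) (x : nat -> X) : Prop :=
  forall n, d (iter f n z) (x n) < eps.

Definition finite_shadows {X : Type} (d : X -> X -> R) (f : X -> X) (eps : R)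
  (N : nat) (z : X) (x : nat -> X) : Prop :=
  forall n, (n <= N)%nat -> d (iter f n z) (x n) < eps.

Definition shadowing_property {X : Type} (d : X -> X -> R) (f : X -> X) : Prop :=
  forall eps, 0 < eps -> exists delta, 0 < delta /\
    forall x, pseudo_orbit d f delta x -> exists z, shadows d f eps z x.

Definition finite_shadowing_property {X : Type} (d : X -> X -> R) (f : X -> X) : Prop :=
  forall eps, 0 < eps -> exists delta, 0 < delta /\
    forall N x, finite_pseudo_orbit d f delta N x -> exists z, finite_shadows d f eps N z x.

(* Approximate a delta-pseudo-orbit of the extension pointwise by points of X.
   Uniform continuity of the extension and density of X make the approximation
   a pseudo-orbit of f with slightly larger error; a point of X shadowing it
   then shadows the original sequence, since the extension agrees with f on X. *)

From Stdlib Require Import Reals Lra ClassicalEpsilon.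
Open Scope R_scope.

Section Completion.

Variables (X Xh : Type) (d : X -> X -> R) (dh : Xh -> Xh -> R).
Variables (i : X -> Xh) (f : X -> X) (fh : Xh -> Xh).

Hypothesis dh_sym : forall x y, dh x y = dh y x.
Hypothesis dh_triangle : forall x y z, dh x z <= dh x y + dh y z.
Hypothesis i_isometry : isometry d dh i.
Hypothesis i_dense : dense_range dh i.
Hypothesis fh_uniformly_continuous : uniformly_continuous dh dh fh.
Hypothesis fh_extends : forall x, fh (i x) = i (f x).

Lemma iter_extends (n : nat) (z : X) : iter fh n (i z) = i (iter f n z).
Proof.
  induction n as [|n IH]; simpl; [reflexivity|].
  rewrite IH; apply fh_extends.
Qed.

Lemma dense_approx_seq (r : R) (y : nat -> Xh) :
  0 < r -> exists x : nat -> X, forall n, dh (i (x n)) (y n) < r.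
Proof.
  intros Hr.
  apply (choice (fun n x => dh (i x) (y n) < r)).
  intros n; exact (i_dense (y n) r Hr).
Qed.

Lemma lift_pseudo_orbit (delta eps : R) :
  0 < delta -> 0 < eps ->
  exists delta', 0 < delta' /\
    forall y : nat -> Xh, exists x : nat -> X,
      (forall n, dh (i (x n)) (y n) < eps) /\
      (forall n, dh (fh (y n)) (y (S n)) < delta' -> d (f (x n)) (x (S n)) < delta).
Proof.
  intros Hdelta Heps.
  destruct (fh_uniformly_continuous (delta / 3)) as [eta [Heta Hfh]]; [lra|].
  exists (delta / 3); split; [lra|].
  intros y.
  set (r := Rmin eta (Rmin (delta / 3) eps)).
  assert (Hr : 0 < r) by (repeat apply Rmin_pos; lra).
  assert (Hr_eta : r <= eta) by apply Rmin_l.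
  assert (Hr_delta : r <= delta / 3)
    by (eapply Rle_trans; [apply Rmin_r | apply Rmin_l]).
  assert (Hr_eps : r <= eps)
    by (eapply Rle_trans; [apply Rmin_r | apply Rmin_r]).
  destruct (dense_approx_seq r y Hr) as [x Hx].
  exists x; split.
  - intros n; specialize (Hx n); lra.
  - intros n Hy.
    rewrite <- i_isometry, <- fh_extends.
    assert (Hf : dh (fh (i (x n))) (fh (y n)) < delta / 3)
      by (apply Hfh; specialize (Hx n); lra).
    assert (Hnext : dh (y (S n)) (i (x (S n))) < delta / 3)
      by (rewrite dh_sym; specialize (Hx (S n)); lra).
    pose proof (dh_triangle (fh (i (x n))) (fh (y n)) (i (x (S n)))).
    pose proof (dh_triangle (fh (y n)) (y (S n)) (i (x (S n)))).
    lra.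
Qed.

Lemma shadow_extends (eps1 eps2 : R) (z : X) (x : nat -> X) (y : nat -> Xh) (n : nat) :
  d (iter f n z) (x n) < eps1 -> dh (i (x n)) (y n) < eps2 ->
  dh (iter fh n (i z)) (y n) < eps1 + eps2.
Proof.
  intros Hz Hx.
  rewrite iter_extends.
  pose proof (dh_triangle (i (iter f n z)) (i (x n)) (y n)).
  rewrite i_isometry in *.
  lra.
Qed.

Lemma completion_shadowing : shadowing_property d f -> shadowing_property dh fh.
Proof.
  intros Hs eps Heps.
  destruct (Hs (eps / 2)) as [delta [Hdelta Hsh]]; [lra|].
  destruct (lift_pseudo_orbit delta (eps / 2)) as [delta' [Hdelta' Hlift]]; [lra..|].
  exists delta'; split; [exact Hdelta'|].
  intros y Hy.
  destruct (Hlift y) as [x [Hclose Hpo]].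
  destruct (Hsh x) as [z Hz]; [intros n; apply Hpo, Hy|].
  exists (i z); intros n.
  replace eps with (eps / 2 + eps / 2) by lra.
  apply shadow_extends with x; [apply Hz | apply Hclose].
Qed.

Lemma completion_finite_shadowing :
  finite_shadowing_property d f -> finite_shadowing_property dh fh.
Proof.
  intros Hs eps Heps.
  destruct (Hs (eps / 2)) as [delta [Hdelta Hsh]]; [lra|].
  destruct (lift_pseudo_orbit delta (eps / 2)) as [delta' [Hdelta' Hlift]]; [lra..|].
  exists delta'; split; [exact Hdelta'|].
  intros N y Hy.
  destruct (Hlift y) as [x [Hclose Hpo]].
  destruct (Hsh N x) as [z Hz]; [intros n Hn; apply Hpo, Hy, Hn|].
  exists (i z); intros n Hn.
  replace eps with (eps / 2 + eps / 2) by lra.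
  apply shadow_extends with x; [apply Hz, Hn | apply Hclose].
Qed.

End Completion.

Theorem theorem2p7 (X : Type) (d : X -> X -> R) (f : X -> X)
  (Xh : Type) (dh : Xh -> Xh -> R) (i : X -> Xh) (fh : Xh -> Xh) :
  is_metric d -> separable d ->
  uniformly_continuous d d f ->
  is_completion d dh i ->
  uniformly_continuous dh dh fh ->
  (forall x, fh (i x) = i (f x)) ->
  (shadowing_property d f -> shadowing_property dh fh) /\
  (finite_shadowing_property d f -> finite_shadowing_property dh fh).
Proof.
  intros _ _ _ [[_ [_ [dh_sym dh_triangle]]] [_ [i_isometry i_dense]]] fh_uc fh_extends.
  split.
  - eapply completion_shadowing; eassumption.
  - eapply completion_finite_shadowing; eassumption.
Qed.
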